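(* Let $T$ be a tree with root $r$, edges directed towards $r$, edge set $E$, and let $B,R$ be disjoint sets of leaves of $T$. For every $Y\subseteq E$, the set $\bar b(Y)$ is legal for the function $c:V(T)\to\mathbb{Z}$, $c(v)=A(v,Y)$.
   Context: Edges are ordered pairs $st$ pointing from $s$ to $t$, directed towards $r$; a leaf is a vertex with no incoming edges. For an edge set $X$, $V(X)$ is the set of vertices incident with an edge of $X$. $A(v,X)$ is the number of edges of $X$ pointing to $v$ minus the number of edges of $X$ pointing away from $v$, and $A(v,X,Y)=A(v,X)-A(v,Y)$. The \emph{blue overflow} $\bar b(Y)$ of $Y\subseteq E$ is defined by transfinite recursion: $Y_0$ is the set of all edges in $E\setminus Y$ whose starting vertex is in $B$; at a successor $\alpha=\beta+1$, if every $st\in E\setminus(Y\cup Y_\beta)$ satisfies $A(s,Y_\beta,Y)\le 0$, stop and set $\bar b(Y)=Y_\beta$; otherwise pick some $st\in E\setminus (Y\cup Y_\beta)$ with $A(s,Y_\beta,Y)\ge 1$ and let $Y_\alpha=Y_\beta\cup\{st\}$; at limits $Y_\alpha=\bigcup_{\beta<\alpha}Y_\beta$. (The result does not depend on the choices made.) A \emph{leafless forest} is an edge set $S$ such that the subforest $(V(S),S)$ of $T$ has no leaf (i.e. no vertex without an incoming edge of $S$). Given an edge set $X$ and $c:V(T)\to\mathbb{Z}$, a subset $S\subseteq X$ is \emph{illegal} for $c$ if $S$ is a leafless forest and $A(s,X\setminus S)\le c(s)$ for all $st\in S$. $X$ is \emph{legal} for $c$ if no nonempty subset of $X$ is illegal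 for $c$. *)

(* Every non-root vertex v has exactly one
   outgoing edge, namely (v, par v); we identify this edge with its tail v.
   So an edge set X ⊆ E is a predicate X : V -> bool with X r = false
   (the value at r is never used as an edge). *)
From mathcomp Require Import all_boot all_order all_algebra.
Set Implicit Arguments. Unset Strict Implicit. Unset Printing Implicit Defensive.
Import Order.TTheory GRing.Theory Num.Theory.
Local Open Scope ring_scope.

Section Tree.
Variables (V : eqType) (r : V) (par : V -> V) (kids : V -> seq V).

Definition is_rooted_tree : Prop :=
  [/\ forall v, exists n, iter n par v = r,
      forall u v, (u \in kids v) = (u != r) && (par u == v)
    & forall v, uniq (kids v)].

Definition inE (X : V -> bool) (s : V) : bool := (s != r) && X s.

Definition leaf (v : V) : bool := kids v == [::].

Definition A (X : V -> bool) (v : V) : int :=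
  (count X (kids v))%:Z - (inE X v)%:Z.

Definition A3 (X Y : V -> bool) (v : V) : int := A X v - A Y v.

Definition Y0 (B Y : V -> bool) (s : V) : bool := [&& s != r, ~~ Y s & B s].

(* Z is a (possible) outcome of the transfinite recursion defining the blue
   overflow of Y.  The ordinal-indexed sequence of added edges is encoded by a
   well-order [ord] on the added edges Z \ Y_0: the stage Y_beta just before
   the edge e is added is Y_0 ∪ {u ∈ Z \ Y_0 | ord u e} (limits = unions),
   e must lie in E \ (Y ∪ Y_beta) and satisfy A(e, Y_beta, Y) >= 1, and the
   recursion stops at Z, i.e. every st ∈ E \ (Y ∪ Z) has A(s, Z, Y) <= 0. *)
Definition blue_overflow (B Y Z : V -> bool) : Prop :=
  exists ord : rel V,
     (forall s, Y0 B Y s -> Z s)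
  /\ (forall s, Z s -> (s != r) && ~~ Y s)
  /\ well_founded (fun a b => ord a b)
  /\ (forall a b c, ord a b -> ord b c -> ord a c)
  /\ (forall a b, Z a -> ~~ Y0 B Y a -> Z b -> ~~ Y0 B Y b -> a != b ->
                  ord a b || ord b a)
  /\ (forall e, Z e -> ~~ Y0 B Y e ->
        1 <= A3 (fun u => Y0 B Y u || [&& Z u, ~~ Y0 B Y u & ord u e]) Y e)
  /\ (forall s, s != r -> ~~ Y s -> ~~ Z s -> A3 Z Y s <= 0).

Definition inVS (S : V -> bool) (v : V) : Prop :=
  inE S v \/ exists u, inE S u /\ par u = v.

Definition leafless_forest (S : V -> bool) : Prop :=
  forall v, inVS S v -> exists u, u \in kids v /\ S u.

Definition illegal (X : V -> bool) (c : V -> int) (S : V -> bool) : Prop :=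
  (forall s, S s -> X s) /\ leafless_forest S /\
  forall s, inE S s -> A (fun u => X u && ~~ S u) s <= c s.

Definition legal (X : V -> bool) (c : V -> int) : Prop :=
  forall S : V -> bool, (exists s, inE S s) -> (forall s, S s -> X s) ->
    ~ illegal X c S.

End Tree.

From Pilot Require Import Defs.
From mathcomp Require Import all_boot all_order all_algebra.
From mathcomp Require Import zify.
Import GRing.Theory.
Local Open Scope ring_scope.
Set Implicit Arguments. Unset Strict Implicit.

(* Suppose S ⊆ b̄(Y) were a nonempty illegal set and let e be the edge of S
   added first by the recursion (S contains no edge of Y_0, whose tails are
   leaves).  The stage Y_beta at which e was added contains no edge of S into
   the tail of e, so A(e, Y_beta) <= A(e, b̄(Y) \ S) <= c(e) = A(e, Y),
   contradicting the condition A(e, Y_beta, Y) >= 1 under which e was added. *)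

Section BlueOverflowLegal.
Variables (V : eqType) (r : V) (par : V -> V) (kids : V -> seq V).

Definition overflow_stage (B Y Z : V -> bool) (ord : rel V) (e : V) :=
  fun u => Y0 r B Y u || [&& Z u, ~~ Y0 r B Y u & ord u e].

Lemma A_le_subpred (X1 X2 : V -> bool) (v : V) :
  subpred X1 X2 -> ~~ Defs.inE r X2 v -> A r kids X1 v <= A r kids X2 v.
Proof.
move=> sub12 /negbTE X2v; rewrite /A X2v subr0.
have := sub_count sub12 (kids v); case: (Defs.inE r X1 v); lia.
Qed.

Lemma leafless_forest_disjoint_Y0 (B Y S : V -> bool) (u : V) :
  (forall v, B v -> leaf kids v) -> leafless_forest r par kids S ->
  S u -> ~~ Y0 r B Y u.
Proof.
move=> Bleaf Sleafless Su; apply/negP => /and3P[ur _ /Bleaf /eqP kids_u].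
have [w [w_kid _]] := Sleafless u (or_introl (introT andP (conj ur Su))).
by rewrite kids_u in w_kid.
Qed.

Lemma first_added_edge_not_illegal (B Y Z S : V -> bool) (ord : rel V) (e : V) :
  (forall s, Y0 r B Y s -> Z s) -> (forall u, S u -> ~~ Y0 r B Y u) ->
  (forall u, ord u e -> ~~ S u) -> S e ->
  1 <= A3 r kids (overflow_stage B Y Z ord e) Y e ->
  A r kids (fun u => Z u && ~~ S u) e <= A r kids Y e -> False.
Proof.
move=> Y0Z SnY0 e_first Se added cap.
have stage_sub : subpred (overflow_stage B Y Z ord e) (fun u => Z u && ~~ S u).
  move=> u /orP[Y0u | /and3P[Zu _ /e_first nSu]]; last by rewrite Zu.
  by rewrite Y0Z //=; apply: contraL Y0u; apply: SnY0.
have e_removed : ~~ Defs.inE r (fun u => Z u && ~~ S u) e.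
  by rewrite /Defs.inE Se !andbF.
have stage_le : A r kids (overflow_stage B Y Z ord e) e
                 <= A r kids (fun u => Z u && ~~ S u) e.
  exact: A_le_subpred stage_sub e_removed.
move: added; rewrite /A3; lia.
Qed.

End BlueOverflowLegal.

Theorem lemma2p7 (V : eqType) (r : V) (par : V -> V) (kids : V -> seq V)
  (Htree : is_rooted_tree r par kids)
  (B R : V -> bool)
  (HB : forall v, B v -> leaf kids v) (HR : forall v, R v -> leaf kids v)
  (HBR : forall v, ~~ (B v && R v))
  (Y : V -> bool) (HY : ~~ Y r)
  (Z : V -> bool) (HZ : blue_overflow r kids B Y Z) :
  legal r par kids Z (fun v => A r kids Y v).
Proof.
move=> S [s0 /andP[_ Ss0]] SZ [_ [Sleafless Scap]].
case: HZ => ord [Y0Z [Zedge [ord_wf [_ [_ [Zadded _]]]]]].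
have SnY0 u : S u -> ~~ Y0 r B Y u := leafless_forest_disjoint_Y0 Y HB Sleafless.
suff S_empty e : S e -> False by exact: S_empty Ss0.
elim/(well_founded_induction ord_wf): e => e IH Se.
have /andP[er _] := Zedge e (SZ e Se).
apply: (first_added_edge_not_illegal Y0Z SnY0 _ Se).
- by move=> u /IH /negP.
- exact: Zadded e (SZ e Se) (SnY0 e Se).
- exact: Scap e (introT andP (conj er Se)).
Qed.
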